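(* Let $\alpha,\theta_2\in(0,\pi/2)$ satisfy $$\frac{1}{\cos\alpha}\ln\Big(\frac{1}{\sin\alpha}+\cot\alpha\Big)=(\pi-\theta_2)\cot\theta_2.$$ Then $$\frac{1}{\sin\alpha}+\frac{1}{\cot\alpha}\ln\Big(\frac{1}{\sin\alpha}+\cot\alpha\Big)\ge\frac{\pi-\theta_2}{\sin\theta_2}-\cos\theta_2.$$ *)

From Stdlib Require Export Reals.
Open Scope R_scope.
Definition cot (x : R) : R := cos x / sin x.

(* Write s = sin alpha, c = cos alpha and K for the common value of the
   hypothesis, so that ln((1 + c)/s) = c K and the left-hand side is 1/s + s K.
   The proof rests on two-sided bounds for the half-angle logarithm
     0.8 c <= ln((1 + c)/s) <= c/s,
   i.e. 0.8 <= K <= 1/s.  The upper bound comes from ln y <= sinh(ln y) and the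
   identity sinh(ln((1 + c)/s)) = c/s; the lower one from ln y >= 1 - 1/y and a
   polynomial inequality in c.  Then:
   - K <= 1/s gives K + 1 <= 1/s + s K, since the difference is (1-s)(1-sK)/s;
   - K >= 0.8, together with the numerical estimate
     (pi - t) sin t <= 1.8 + 0.2 cos t on (0, pi/2) (Taylor bounds and
     pi < 3.15), gives (pi - theta)/sin theta - cos theta <= K + 1.
   The file proves the Taylor and numerical facts first, then the logarithm
   bounds, then the two comparisons, and derives the theorem from them. *)

From Stdlib Require Import Reals Lra Psatz.
Open Scope R_scope.

(* Evaluates the closed terms [INR (fact k)] occurring in Taylor polynomials. *)
Ltac eval_factorials :=
  rewrite ?INR_IZR_INZ;
  repeat match goal with |- context [Z.of_nat ?n] =>
    let v := eval vm_compute in (Z.of_nat n) in change (Z.of_nat n) with v end.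

Lemma sin_le_taylor5 (a : R) : 0 <= a <= PI ->
  sin a <= a - a^3/6 + a^5/120.
Proof.
  intros [a0 aPI].
  destruct (sin_bound a 0 a0 aPI) as [_ hs].
  replace (sin_approx a (2 * (0 + 1))) with (a - a^3/6 + a^5/120) in hs
    by (unfold sin_approx, sin_term; cbn [sum_f_R0 Nat.mul Nat.add];
        eval_factorials; simpl; field).
  exact hs.
Qed.

Lemma taylor6_le_cos (a : R) : - PI / 2 <= a <= PI / 2 ->
  1 - a^2/2 + a^4/24 - a^6/720 <= cos a.
Proof.
  intros [lo hi].
  destruct (cos_bound a 1 lo hi) as [hc _].
  replace (cos_approx a (2 * 1 + 1)) with (1 - a^2/2 + a^4/24 - a^6/720) in hc
    by (unfold cos_approx, cos_term; cbn [sum_f_R0 Nat.mul Nat.add];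
        eval_factorials; simpl; field).
  exact hc.
Qed.

Lemma cos_le_taylor8 (a : R) : - PI / 2 <= a <= PI / 2 ->
  cos a <= 1 - a^2/2 + a^4/24 - a^6/720 + a^8/40320.
Proof.
  intros [lo hi].
  destruct (cos_bound a 1 lo hi) as [_ hc].
  replace (cos_approx a (2 * (1 + 1)))
    with (1 - a^2/2 + a^4/24 - a^6/720 + a^8/40320) in hc
    by (unfold cos_approx, cos_term; cbn [sum_f_R0 Nat.mul Nat.add];
        eval_factorials; simpl; field).
  exact hc.
Qed.

(* pi < 3.15: otherwise 1.575 <= pi/2, so cos 1.575 >= 0, while its
   degree-8 Taylor upper bound is negative. *)
Lemma PI_lt_315 : PI < 3.15.
Proof.
  destruct (Rlt_or_le PI 3.15) as [h | h]; [exact h | exfalso].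
  pose proof PI_RGT_0.
  assert (0 <= cos 1.575) by (apply cos_ge_0; lra).
  pose proof (cos_le_taylor8 1.575 ltac:(lra)).
  lra.
Qed.

Lemma taylor_estimate (t : R) : 0 <= t <= 1.575 ->
  (3.15 - t) * (t - t^3/6 + t^5/120)
  <= 1.8 + 0.2 * (1 - t^2/2 + t^4/24 - t^6/720).
Proof.
  intros [t0 t1].
  destruct (Rle_or_lt t 1) as [h1 | h1].
  { assert (0 <= t * (1 - t)) by nra. nra. }
  destruct (Rle_or_lt t 1.2) as [h2 | h2].
  { assert (0 <= (t - 1) * (1.2 - t)) by nra. nra. }
  assert (0 <= (t - 1.2) * (1.575 - t)) by nra. nra.
Qed.

Lemma sin_estimate (t : R) : 0 < t < PI / 2 ->
  (PI - t) * sin t <= 1.8 + 0.2 * cos t.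
Proof.
  intros [t0 t1].
  pose proof PI_lt_315.
  assert (sin_pos : 0 <= sin t) by (apply sin_ge_0; lra).
  pose proof (sin_le_taylor5 t ltac:(lra)) as sin_up.
  pose proof (taylor6_le_cos t ltac:(lra)) as cos_lo.
  pose proof (taylor_estimate t ltac:(lra)).
  assert ((PI - t) * sin t <= (3.15 - t) * sin t) by nra.
  assert ((3.15 - t) * sin t <= (3.15 - t) * (t - t^3/6 + t^5/120))
    by (apply Rmult_le_compat_l; lra).
  lra.
Qed.

Lemma cosh_ge_1 (x : R) : 1 <= cosh x.
Proof.
  unfold cosh. rewrite exp_Ropp.
  pose proof (exp_pos x) as ex.
  assert (0 <= (exp x - 1) ^ 2 / exp x)
    by (apply Rmult_le_pos;
          [apply pow2_ge_0 | apply Rlt_le, Rinv_0_lt_compat; lra]).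
  replace ((exp x + / exp x) / 2) with (1 + (exp x - 1) ^ 2 / exp x / 2)
    by (field; lra).
  lra.
Qed.

(* x <= sinh x for x >= 0, since sinh - id has derivative cosh - 1 >= 0. *)
Lemma le_sinh (x : R) : 0 <= x -> x <= sinh x.
Proof.
  intros x0. destruct (Req_dec x 0) as [-> | xn0].
  { rewrite sinh_0; lra. }
  assert (pr : derivable (sinh - id)%F)
    by (apply derivable_minus; [apply derivable_sinh | apply derivable_id]).
  assert (deriv_nonneg : forall t, 0 < t < x ->
            0 <= derive_pt (sinh - id)%F t (pr t)).
  { intros t _. rewrite (derive_pt_eq_0 _ _ (cosh t - 1)).
    - pose proof (cosh_ge_1 t); lra.
    - apply derivable_pt_lim_minus;
        [apply derivable_pt_lim_sinh | apply derivable_pt_lim_id]. }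
  pose proof (derive_increasing_interv_var 0 x (sinh - id)%F pr ltac:(lra)
                deriv_nonneg 0 x ltac:(lra) ltac:(lra) ltac:(lra)) as incr.
  unfold minus_fct, id in incr. rewrite sinh_0 in incr. lra.
Qed.

Lemma one_minus_inv_le_ln (y : R) : 0 < y -> 1 - / y <= ln y.
Proof.
  intros y0.
  pose proof (exp_ineq1_le (- ln y)) as he.
  rewrite exp_Ropp, exp_ln in he by lra.
  lra.
Qed.

Lemma ln_le_half_diff (y : R) : 1 <= y -> ln y <= (y - / y) / 2.
Proof.
  intros y1.
  assert (ln_nonneg : 0 <= ln y).
  { pose proof (one_minus_inv_le_ln y ltac:(lra)).
    assert (/ y <= 1) by (rewrite <- Rinv_1; apply Rinv_le_contravar; lra).
    lra. }
  pose proof (le_sinh (ln y) ln_nonneg) as hs.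
  unfold sinh in hs. rewrite exp_Ropp, exp_ln in hs by lra.
  exact hs.
Qed.

(* The half-angle quantity (1 + c)/s = cot(alpha/2), for a point (c, s) of
   the unit circle in the closed first quadrant with s > 0. *)
Section HalfAngle.
Variables s c : R.
Hypotheses (s_pos : 0 < s) (c_nonneg : 0 <= c) (pythagoras : s * s + c * c = 1).

Lemma half_angle_ge_1 : 1 <= (1 + c) / s.
Proof.
  apply Rmult_le_reg_r with s; [lra |].
  replace ((1 + c) / s * s) with (1 + c) by (field; lra).
  nra.
Qed.

Lemma half_angle_inv : / ((1 + c) / s) = s / (1 + c).
Proof. field; lra. Qed.

(* sinh(ln((1 + c)/s)) = c/s, so the upper logarithm bound gives ln <= c/s. *)
Lemma ln_half_angle_le : ln ((1 + c) / s) <= c / s.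
Proof.
  pose proof (ln_le_half_diff _ half_angle_ge_1) as hl.
  rewrite half_angle_inv in hl.
  replace (((1 + c) / s - s / (1 + c)) / 2) with (c / s) in hl.
  - exact hl.
  - apply Rmult_eq_reg_r with (2 * s * (1 + c)); [| nra].
    field_simplify; [nra | lra | lra].
Qed.

(* 1 - s/(1 + c) >= 0.8 c: equivalently s <= 1 + 0.2 c - 0.8 c^2, which after
   squaring is a cubic inequality in c, nonnegative on [0, 1]. *)
Lemma half_angle_poly : 0.8 * c <= 1 - s / (1 + c).
Proof.
  apply Rmult_le_reg_r with (1 + c); [lra |].
  replace ((1 - s / (1 + c)) * (1 + c)) with (1 + c - s) by (field; lra).
  assert (c_le_1 : c <= 1) by nra.
  assert (cubic : 0 <= 0.4 - 0.56 * c - 0.32 * c * c + 0.64 * c * c * c).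
  { pose proof (Rle_0_sqr (c - 0.77)) as sq1.
    pose proof (Rle_0_sqr (c - 0.7057)) as sq2.
    unfold Rsqr in sq1, sq2.
    assert (0 <= c * ((c - 0.77) * (c - 0.77))) by (apply Rmult_le_pos; lra).
    assert (0 <= 0.4 - 0.9395 * c + 0.6656 * c * c) by nra.
    nra. }
  set (X := 1 + 0.2 * c - 0.8 * c * c).
  assert (X_pos : 0 < X) by (unfold X; nra).
  assert (s * s <= X * X) by (unfold X; nra).
  assert (s <= X) by nra.
  unfold X in *. nra.
Qed.

Lemma ln_half_angle_ge : 0.8 * c <= ln ((1 + c) / s).
Proof.
  pose proof (one_minus_inv_le_ln ((1 + c) / s) ltac:(pose proof half_angle_ge_1; lra)).
  rewrite half_angle_inv in *.
  pose proof half_angle_poly.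
  lra.
Qed.

End HalfAngle.

(* Right-hand side: if K = (pi - t) cot t >= 0.8 then
   (pi - t)/sin t - cos t <= K + 1.  Clearing sin t, this is
   (pi - t)(1 - cos t) <= sin t (1 + cos t), which follows from K >= 0.8 and
   the numerical estimate [sin_estimate]. *)
Lemma rhs_le (t : R) : 0 < t < PI / 2 -> 0.8 <= (PI - t) * cot t ->
  (PI - t) / sin t - cos t <= (PI - t) * cot t + 1.
Proof.
  intros ht hK. unfold cot in *.
  pose proof (sin_estimate t ht) as est.
  assert (w0 : 0 < sin t) by (apply sin_gt_0; lra).
  assert (u0 : 0 < cos t) by (apply cos_gt_0; lra).
  pose proof (sin2_cos2 t) as pyth. unfold Rsqr in pyth.
  set (w := sin t) in *. set (u := cos t) in *. set (P := PI - t) in *.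
  assert (P0 : 0 < P) by (unfold P; lra).
  assert (Pu_ge : 0.8 * w <= P * u).
  { apply Rmult_le_compat_r with (r := w) in hK; [| lra].
    replace (P * (u / w) * w) with (P * u) in hK by (field; lra). lra. }
  assert (key : P * (1 - u) <= w * (1 + u)).
  { assert (0 <= w * ((1 + u) + 0.8 * (1 - u) - P * w)) by nra.
    assert (0 <= (1 - u) * (P * u - 0.8 * w)) by nra.
    nra. }
  apply Rmult_le_reg_r with w; [lra |].
  replace ((P / w - u) * w) with (P - u * w) by (field; lra).
  replace ((P * (u / w) + 1) * w) with (P * u + w) by (field; lra).
  nra.
Qed.

(* Left-hand side: for 0 < s <= 1 and s K <= 1, K + 1 <= 1/s + s K, since
   s (1/s + s K - K - 1) = (1 - s)(1 - s K). *)
Lemma lhs_ge (s K : R) : 0 < s <= 1 -> s * K <= 1 -> K + 1 <= 1 / s + s * K.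
Proof.
  intros hs hsK.
  apply Rmult_le_reg_r with s; [lra |].
  replace ((1 / s + s * K) * s) with (1 + s * (s * K)) by (field; lra).
  nra.
Qed.

Theorem lemma4p6 (alpha theta2 : R)
  (ha : 0 < alpha < PI / 2) (ht : 0 < theta2 < PI / 2)
  (hrel : (1 / cos alpha) * ln (1 / sin alpha + cot alpha)
          = (PI - theta2) * cot theta2) :
  1 / sin alpha + (1 / cot alpha) * ln (1 / sin alpha + cot alpha)
  >= (PI - theta2) / sin theta2 - cos theta2.
Proof.
  pose proof (rhs_le theta2 ht) as rhs.
  remember ((PI - theta2) * cot theta2) as K eqn:K_def.
  assert (s_pos : 0 < sin alpha) by (apply sin_gt_0; lra).
  assert (c_pos : 0 < cos alpha) by (apply cos_gt_0; lra).
  pose proof (sin2_cos2 alpha) as pyth. unfold Rsqr in pyth.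
  unfold cot in hrel |- *.
  replace (1 / sin alpha + cos alpha / sin alpha)
    with ((1 + cos alpha) / sin alpha) in * by (field; lra).
  (* ln((1 + c)/s) = c K, so the logarithm bounds become 0.8 <= K <= 1/s. *)
  assert (hL : ln ((1 + cos alpha) / sin alpha) = cos alpha * K).
  { rewrite <- hrel. field; lra. }
  pose proof (ln_half_angle_le _ _ s_pos (Rlt_le _ _ c_pos) pyth) as upper.
  pose proof (ln_half_angle_ge _ _ s_pos (Rlt_le _ _ c_pos) pyth) as lower.
  rewrite hL in upper, lower.
  assert (K_ge : 0.8 <= K) by nra.
  assert (sK_le : sin alpha * K <= 1).
  { apply Rmult_le_reg_l with (cos alpha / sin alpha);
      [apply Rdiv_pos_pos; lra |].
    replace (cos alpha / sin alpha * (sin alpha * K)) with (cos alpha * K)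
      by (field; lra).
    lra. }
  rewrite hL.
  replace (1 / (cos alpha / sin alpha) * (cos alpha * K)) with (sin alpha * K)
    by (field; lra).
  pose proof (rhs K_ge).
  pose proof (lhs_ge (sin alpha) K ltac:(nra) sK_le).
  lra.
Qed.
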